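(* Let $k$ be a positive integer and let $a_1\ge a_2\ge\cdots\ge a_{k+1}$ and $b_1\ge b_2\ge\cdots\ge b_{k+1}$ be real numbers in $[a,b]$ with $a_1\ge b_1$ and $(-1)^k a_{k+1}\le(-1)^k b_{k+1}$, such that $\sum_{i=1}^{k+1}a_i^j=\sum_{i=1}^{k+1}b_i^j$ for all integers $1\le j<k$. Then \[ \sum_{i=1}^{k+1}f(a_i)\ge\sum_{i=1}^{k+1}f(b_i) \] for every $k$ times differentiable $f:[a,b]\to\mathbb{R}$ with $f^{(k)}\ge 0$. *)

From Stdlib Require Import Reals.
Open Scope R_scope.

Definition deriv_on (a b : R) (g g' : R -> R) : Prop :=
  forall x, a <= x <= b ->
    limit1_in (fun y => (g y - g x) / (y - x))
              (fun y => a <= y <= b /\ y <> x) (g' x) x.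

Definition k_diff_nonneg_kth (k : nat) (a b : R) (f : R -> R) : Prop :=
  exists D : nat -> R -> R,
    (forall x, a <= x <= b -> D 0%nat x = f x) /\
    (forall i, (i < k)%nat -> deriv_on a b (D i) (D (S i))) /\
    (forall x, a <= x <= b -> 0 <= D k x).

From Stdlib Require Import Reals Lra Lia Arith Classical.
Open Scope R_scope.

(** Write [sum_i f(a_i) - sum_i f(b_i) = sum_j c_j f(s_j)], where
    [s_0 < ... < s_(m-1)] are the distinct values of the two samples and
    [c_j] is the multiplicity of [s_j] among the [a_i] minus that among the
    [b_i]. The equal power sums say that [c] is orthogonal to the polynomials
    of degree [< k] at the nodes. Repeated Abel summation then rewrites
    [sum_j c_j f(s_j)] as [sum_j W_k(j) f[s_j, ..., s_(j+k)]], a combination of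
    divided differences of order [k]; each of them is [f^(k)(xi)/k! >= 0] by
    iterated Rolle applied to [f] minus its interpolation polynomial.

    The weights [W_k] are nonnegative by a variation-diminishing argument:
    the partial sums of [c] are the differences [B(t) - A(t)] of the counting
    functions [#{i | a_i > t}] and [#{i | b_i > t}], which by the ordering
    and endpoint hypotheses change sign at most [k-1] times; each Abel step
    (partial sums of a zero-sum sequence) removes one sign change, so after
    [k-1] steps [W_k] has constant sign, and that sign is [+]. *)

(** [fsum n g] is [g 0 + ... + g (n-1)]; unlike [sum_f_R0] it allows empty sums. *)
Fixpoint fsum (n : nat) (g : nat -> R) : R :=
  match n with O => 0 | S n' => fsum n' g + g n' end.

Lemma sum_f_R0_fsum (g : nat -> R) (k : nat) : sum_f_R0 g k = fsum (S k) g.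
Proof. induction k; simpl; [lra|]. now rewrite IHk. Qed.

Lemma fsum_ext (n : nat) (g h : nat -> R) :
  (forall i, (i < n)%nat -> g i = h i) -> fsum n g = fsum n h.
Proof.
  induction n; simpl; intros H; auto.
  rewrite IHn by (intros; apply H; lia). now rewrite H by lia.
Qed.

Lemma fsum_plus (n : nat) (g h : nat -> R) :
  fsum n (fun i => g i + h i) = fsum n g + fsum n h.
Proof. induction n; simpl; [lra|]. rewrite IHn; lra. Qed.

Lemma fsum_minus (n : nat) (g h : nat -> R) :
  fsum n (fun i => g i - h i) = fsum n g - fsum n h.
Proof. induction n; simpl; [lra|]. rewrite IHn; lra. Qed.

Lemma fsum_scal (n : nat) (c : R) (g : nat -> R) :
  fsum n (fun i => c * g i) = c * fsum n g.
Proof. induction n; simpl; [lra|]. rewrite IHn; lra. Qed.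

Lemma fsum_opp (n : nat) (g : nat -> R) : - fsum n g = fsum n (fun i => - g i).
Proof. induction n; simpl; [ring|]. rewrite <- IHn; ring. Qed.

Lemma fsum_zero (n : nat) (g : nat -> R) :
  (forall i, (i < n)%nat -> g i = 0) -> fsum n g = 0.
Proof.
  intros H. rewrite (fsum_ext n g (fun i => 0 * g i)), fsum_scal; [ring|].
  intros i Hi; rewrite H by lia; ring.
Qed.

Lemma fsum_nonneg (n : nat) (g : nat -> R) :
  (forall i, (i < n)%nat -> 0 <= g i) -> 0 <= fsum n g.
Proof.
  induction n; simpl; intros H; [lra|].
  pose proof (H n ltac:(lia)); pose proof (IHn ltac:(intros; apply H; lia)); lra.
Qed.

Lemma fsum_split (p q : nat) (g : nat -> R) :
  fsum (p + q) g = fsum p g + fsum q (fun i => g (p + i)%nat).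
Proof.
  induction q; simpl; [rewrite Nat.add_0_r; lra|].
  rewrite Nat.add_succ_r; simpl; rewrite IHq; lra.
Qed.

Lemma fsum_exchange (n m : nat) (F : nat -> nat -> R) :
  fsum n (fun i => fsum m (fun j => F i j)) = fsum m (fun j => fsum n (fun i => F i j)).
Proof.
  induction n; simpl; [symmetry; now apply fsum_zero|].
  now rewrite IHn, <- fsum_plus.
Qed.

Lemma abel_summation (n : nat) (w d : nat -> R) :
  fsum (S n) (fun j => w j * d j) =
  fsum (S n) w * d n - fsum n (fun j => fsum (S j) w * (d (S j) - d j)).
Proof.
  induction n; [simpl; lra|].
  change (fsum (S (S n)) ?g) with (fsum (S n) g + g (S n)).
  change (fsum (S n) (fun j => fsum (S j) w * (d (S j) - d j))) with
    (fsum n (fun j => fsum (S j) w * (d (S j) - d j)) + fsum (S n) w * (d (S n) - d n)).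
  rewrite IHn; lra.
Qed.

(** [poly_lead d h L]: [h] is a polynomial function of degree at most [d]
    whose coefficient of [x^d] is [L]. We only need the closure properties
    below, so polynomials are described inductively rather than by coefficient
    lists. *)
Inductive poly_lead : nat -> (R -> R) -> R -> Prop :=
| poly_const c : poly_lead 0 (fun _ => c) c
| poly_mul_linear d h L c : poly_lead d h L -> poly_lead (S d) (fun x => (x - c) * h x) L
| poly_raise d h L : poly_lead d h L -> poly_lead (S d) h 0
| poly_comb d h1 h2 L1 L2 u v : poly_lead d h1 L1 -> poly_lead d h2 L2 ->
    poly_lead d (fun x => u * h1 x + v * h2 x) (u * L1 + v * L2)
| poly_ext d h1 h2 L : poly_lead d h1 L -> (forall x, h1 x = h2 x) -> poly_lead d h2 L.

Lemma poly_lead_pow (r : nat) : poly_lead r (fun x => x ^ r) 1.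
Proof.
  induction r; [exact (poly_const 1)|].
  apply poly_ext with (fun x => (x - 0) * x ^ r); [now apply poly_mul_linear|].
  intros; simpl; ring.
Qed.

Lemma derivative_of_constant (F : R -> R) (K x l : R) :
  (forall y, F y = K) -> derivable_pt_lim F x l -> l = 0.
Proof.
  intros HF Hl. apply (uniqueness_limite F x); auto.
  apply derivable_pt_lim_ext with (fct_cte K); [intros; now rewrite HF|].
  apply derivable_pt_lim_const.
Qed.

(** Leibniz rule along a chain of derivatives: if [Q (i+1)] is the derivative
    of [Q i] for all [i], then [(x - c) Q_i(x) + i Q_(i-1)(x)] is the [i]-th
    derivative of [(x - c) Q_0(x)]. *)
Definition leibniz_chain (Q : nat -> R -> R) (c : R) (i : nat) (x : R) : R :=
  (x - c) * Q i x + INR i * match i with O => 0 | S i' => Q i' x end.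

Lemma derivatives_mul_linear (Q : nat -> R -> R) (c : R) :
  (forall i x, derivable_pt_lim (Q i) x (Q (S i) x)) ->
  (forall x, leibniz_chain Q c 0 x = (x - c) * Q 0%nat x) /\
  (forall i x, derivable_pt_lim (leibniz_chain Q c i) x (leibniz_chain Q c (S i) x)).
Proof.
  intros Q1; split; [intros; unfold leibniz_chain; simpl; ring|].
  assert (Hlin : forall x, derivable_pt_lim (fun y => y - c) x 1).
  { intros x; replace 1 with (1 - 0) by ring.
    apply (derivable_pt_lim_minus id (fct_cte c));
      [apply derivable_pt_lim_id|apply derivable_pt_lim_const]. }
  intros i x; unfold leibniz_chain; destruct i.
  - apply derivable_pt_lim_ext with (fun y => (y - c) * Q 0%nat y); [intros; simpl; ring|].
    replace (_ + INR 1 * _) with (1 * Q 0%nat x + (x - c) * Q 1%nat x) by (simpl; ring).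
    apply (derivable_pt_lim_mult (fun y => y - c) (Q 0%nat)); auto.
  - replace (_ + INR (S (S i)) * _) with
      ((1 * Q (S i) x + (x - c) * Q (S (S i)) x) + INR (S i) * Q (S i) x)
      by (rewrite !S_INR; ring).
    apply (derivable_pt_lim_plus (fun y => (y - c) * Q (S i) y) (fun y => INR (S i) * Q i y)).
    + apply (derivable_pt_lim_mult (fun y => y - c) (Q (S i))); auto.
    + apply (derivable_pt_lim_scal (Q i)); auto.
Qed.

Lemma poly_lead_derivatives (d : nat) (h : R -> R) (L : R) : poly_lead d h L ->
  exists H : nat -> R -> R,
    (forall x, H 0%nat x = h x) /\
    (forall i x, derivable_pt_lim (H i) x (H (S i) x)) /\
    (forall x, H d x = INR (fact d) * L).
Proof.
  induction 1 as [c|d h L c _ [Q [Q0 [Q1 Q2]]]|d h L _ [Q [Q0 [Q1 Q2]]]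
                 |d h1 h2 L1 L2 u v _ [Q [Q0 [Q1 Q2]]] _ [G [G0 [G1 G2]]]
                 |d h1 h2 L _ [Q [Q0 [Q1 Q2]]] Hext].
  - exists (fun i _ => match i with O => c | S _ => 0 end); repeat split.
    + intros i x; destruct i; apply derivable_pt_lim_const.
    + intros; simpl; ring.
  - destruct (derivatives_mul_linear Q c Q1) as [P0 P1].
    exists (leibniz_chain Q c); repeat split; auto.
    + intros; rewrite P0, Q0; auto.
    + intros x; unfold leibniz_chain.
      (* Q d is constant, so Q (d+1) vanishes *)
      assert (Q3 : Q (S d) x = 0) by (eapply derivative_of_constant; [exact Q2|apply Q1]).
      rewrite Q3, Q2. change (fact (S d)) with (S d * fact d)%nat. rewrite mult_INR; ring.
  - exists Q; repeat split; auto.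
    intros x; rewrite Rmult_0_r; eapply derivative_of_constant; [exact Q2|apply Q1].
  - exists (fun i x => u * Q i x + v * G i x); repeat split.
    + intros; now rewrite Q0, G0.
    + intros i x. apply (derivable_pt_lim_plus (fun y => u * Q i y) (fun y => v * G i y));
        apply derivable_pt_lim_scal; auto.
    + intros; rewrite Q2, G2; ring.
  - exists Q; repeat split; auto. intros; now rewrite Q0.
Qed.

(** * Divided differences on strictly increasing nodes *)

Definition strictly_increasing (s : nat -> R) : Prop := forall j, s j < s (S j).

Lemma strictly_increasing_lt (s : nat -> R) :
  strictly_increasing s -> forall i j, (i < j)%nat -> s i < s j.
Proof. intros Hs i j Hij; induction Hij; [apply Hs|]. specialize (Hs m); lra. Qed.

Lemma strictly_increasing_le (s : nat -> R) :
  strictly_increasing s -> forall i j, (i <= j)%nat -> s i <= s j.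
Proof.
  intros Hs i j Hij. destruct (Nat.eq_dec i j) as [->|]; [lra|].
  left; apply strictly_increasing_lt; auto; lia.
Qed.

(** [divdiff s r j g] is the divided difference [g[s_j, ..., s_(j+r)]]. *)
Fixpoint divdiff (s : nat -> R) (r j : nat) (g : R -> R) : R :=
  match r with
  | O => g (s j)
  | S r' => (divdiff s r' (S j) g - divdiff s r' j g) / (s (j + S r')%nat - s j)
  end.

Section DividedDifferences.

Variable s : nat -> R.
Hypothesis s_incr : strictly_increasing s.

Lemma node_gap_neq0 (i j : nat) : (i < j)%nat -> s j - s i <> 0.
Proof. intros Hij; pose proof (strictly_increasing_lt s s_incr i j Hij); lra. Qed.

Lemma divdiff_ext (r j : nat) (g h : R -> R) :
  (forall i, (j <= i <= j + r)%nat -> g (s i) = h (s i)) ->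
  divdiff s r j g = divdiff s r j h.
Proof.
  revert j; induction r; intros j H; simpl; [apply H; lia|].
  rewrite (IHr (S j)), (IHr j); auto; intros; apply H; lia.
Qed.

Lemma divdiff_lin (r j : nat) (g h : R -> R) (u v : R) :
  divdiff s r j (fun x => u * g x + v * h x) = u * divdiff s r j g + v * divdiff s r j h.
Proof. revert j; induction r; intros j; simpl; auto. rewrite !IHr; unfold Rdiv; ring. Qed.

Lemma divdiff_linear_factor (d j : nat) (h : R -> R) (c : R) :
  divdiff s (S d) j (fun x => (x - c) * h x) =
  (s j - c) * divdiff s (S d) j h + divdiff s d (S j) h.
Proof.
  revert j; induction d; intros j.
  - simpl; replace (j + 1)%nat with (S j) by lia.
    pose proof (node_gap_neq0 j (S j) ltac:(lia)); field; auto.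
  - change (divdiff s (S (S d)) j ?g) with
      ((divdiff s (S d) (S j) g - divdiff s (S d) j g) / (s (j + S (S d))%nat - s j)).
    rewrite !IHd.
    change (divdiff s (S d) (S j) h) with
      ((divdiff s d (S (S j)) h - divdiff s d (S j) h) / (s (S j + S d)%nat - s (S j))).
    replace (S j + S d)%nat with (j + S (S d))%nat by lia.
    pose proof (node_gap_neq0 (S j) (j + S (S d)) ltac:(lia)).
    pose proof (node_gap_neq0 j (j + S (S d)) ltac:(lia)).
    field; auto.
Qed.

Lemma divdiff_poly (d : nat) (h : R -> R) (L : R) :
  poly_lead d h L -> forall j, divdiff s d j h = L.
Proof.
  induction 1 as [| | | |d h1 h2 L _ IH Hext]; intros j.
  - reflexivity.
  - rewrite divdiff_linear_factor; simpl divdiff; rewrite !IHpoly_lead; unfold Rdiv; ring.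
  - simpl; rewrite !IHpoly_lead; unfold Rdiv; ring.
  - now rewrite divdiff_lin, IHpoly_lead1, IHpoly_lead2.
  - rewrite <- (IH j); apply divdiff_ext; intros; now rewrite Hext.
Qed.

End DividedDifferences.

Lemma limit1_in_iff (f : R -> R) (D : R -> Prop) (l x0 : R) :
  limit1_in f D l x0 <->
  forall eps, eps > 0 -> exists alp, alp > 0 /\
    forall y, D y -> Rabs (y - x0) < alp -> Rabs (f y - l) < eps.
Proof.
  unfold limit1_in, limit_in; simpl; unfold Rdist.
  split; intros H eps He; destruct (H eps He) as [alp [Ha H']];
    exists alp; split; auto; intros; apply H'; tauto.
Qed.

Lemma deriv_on_of_derivable (a b : R) (G G' : R -> R) :
  (forall x, derivable_pt_lim G x (G' x)) -> deriv_on a b G G'.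
Proof.
  intros H x Hx; apply limit1_in_iff; intros eps He.
  destruct (H x eps He) as [d Hd]; exists d; split; [apply cond_pos|].
  intros y [Hy Hyx] Hyd.
  specialize (Hd (y - x) ltac:(lra) Hyd). now replace (x + (y - x)) with y in Hd by ring.
Qed.

Lemma deriv_on_minus (a b : R) (g1 g1' g2 g2' : R -> R) :
  deriv_on a b g1 g1' -> deriv_on a b g2 g2' ->
  deriv_on a b (fun y => g1 y - g2 y) (fun y => g1' y - g2' y).
Proof.
  intros H1 H2 x Hx.
  pose proof (limit_minus _ _ _ _ _ _ (H1 x Hx) (H2 x Hx)) as H.
  rewrite limit1_in_iff in *; intros eps He.
  destruct (H eps He) as [alp [Ha Hb]]; exists alp; split; auto.
  intros y Hy Hyx; specialize (Hb y Hy Hyx).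
  replace ((g1 y - g2 y - (g1 x - g2 x)) / (y - x))
    with ((g1 y - g1 x) / (y - x) - (g2 y - g2 x) / (y - x)) by (unfold Rdiv; ring).
  exact Hb.
Qed.

Lemma deriv_on_continuous (a b : R) (g g' : R -> R) (x : R) :
  deriv_on a b g g' -> a <= x <= b ->
  forall eps, eps > 0 -> exists del, del > 0 /\
    forall y, a <= y <= b -> Rabs (y - x) < del -> Rabs (g y - g x) < eps.
Proof.
  intros H Hx eps He.
  pose proof (H x Hx) as Hl; rewrite limit1_in_iff in Hl.
  destruct (Hl 1 Rlt_0_1) as [alp [Ha Hb]].
  set (M := Rabs (g' x) + 1).
  assert (HM : M > 0) by (unfold M; pose proof (Rabs_pos (g' x)); lra).
  exists (Rmin alp (eps / M)); split.
  { apply Rmin_pos; [lra|apply Rdiv_lt_0_compat; lra]. }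
  intros y Hy Hyx. destruct (Req_dec y x) as [->|Hne].
  { replace (g x - g x) with 0 by ring; rewrite Rabs_R0; lra. }
  pose proof (Rmin_l alp (eps / M)); pose proof (Rmin_r alp (eps / M)).
  specialize (Hb y (conj Hy Hne) ltac:(lra)).
  assert (Hq : Rabs ((g y - g x) / (y - x)) < M).
  { unfold M; pose proof (Rabs_triang_inv ((g y - g x) / (y - x)) (g' x)); lra. }
  replace (g y - g x) with ((g y - g x) / (y - x) * (y - x)) by (field; lra).
  rewrite Rabs_mult.
  assert (0 < Rabs (y - x)) by (apply Rabs_pos_lt; lra).
  apply Rle_lt_trans with (M * Rabs (y - x)); [apply Rmult_le_compat_r; lra|].
  replace eps with (M * (eps / M)) by (field; lra).
  apply Rmult_lt_compat_l; lra.
Qed.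

(** Projection of the real line onto [[a,b]]; it lets us extend a function
    given on [[a,b]] to a function continuous on [R]. *)
Definition clamp (a b y : R) : R := Rmax a (Rmin b y).

Lemma clamp_in (a b y : R) : a <= b -> a <= clamp a b y <= b.
Proof. intros; unfold clamp, Rmax, Rmin; repeat destruct Rle_dec; lra. Qed.

Lemma clamp_id (a b y : R) : a <= y <= b -> clamp a b y = y.
Proof. intros; unfold clamp, Rmax, Rmin; repeat destruct Rle_dec; lra. Qed.

Lemma clamp_lipschitz (a b y z : R) :
  a <= b -> Rabs (clamp a b y - clamp a b z) <= Rabs (y - z).
Proof.
  intros; unfold clamp, Rmax, Rmin.
  repeat destruct Rle_dec; unfold Rabs; repeat destruct Rcase_abs; lra.
Qed.

Lemma rolle_on (a b : R) (g g' : R -> R) (u v : R) :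
  a <= u -> u < v -> v <= b -> deriv_on a b g g' -> g u = g v ->
  exists z, u < z < v /\ g' z = 0.
Proof.
  intros Hau Huv Hvb Hd Heq.
  set (G := fun y => g (clamp a b y)).
  assert (Hder : forall x, u < x < v -> derivable_pt_lim G x (g' x)).
  { intros x Hx eps He.
    pose proof (Hd x ltac:(lra)) as Hl; rewrite limit1_in_iff in Hl.
    destruct (Hl eps He) as [alp [Ha Hb]].
    assert (Hp : 0 < Rmin alp (Rmin (x - a) (b - x))) by (repeat apply Rmin_pos; lra).
    exists (mkposreal _ Hp); intros h Hh0 Hh; simpl in Hh.
    pose proof (Rmin_l alp (Rmin (x - a) (b - x))); pose proof (Rmin_r alp (Rmin (x - a) (b - x))).
    pose proof (Rmin_l (x - a) (b - x)); pose proof (Rmin_r (x - a) (b - x)).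
    assert (Hxh : a <= x + h <= b) by (unfold Rabs in Hh; destruct Rcase_abs in Hh; lra).
    unfold G; rewrite (clamp_id a b (x + h)), (clamp_id a b x) by lra.
    assert (Hne : x + h <> x) by (intro; apply Hh0; lra).
    specialize (Hb (x + h) (conj Hxh Hne)).
    replace (x + h - x) with h in Hb by ring. apply Hb; lra. }
  assert (pr : forall x, u < x < v -> derivable_pt G x)
    by (intros x Hx; exists (g' x); now apply Hder).
  assert (Hc : forall x, u <= x <= v -> continuity_pt G x).
  { intros x Hx; unfold continuity_pt, continue_in; apply limit1_in_iff; intros eps He.
    destruct (deriv_on_continuous a b g g' x Hd ltac:(lra) eps He) as [del [Hdel Hdd]].
    exists del; split; auto; intros y _ Hy.
    unfold G; rewrite (clamp_id a b x) by lra.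
    apply Hdd; [apply clamp_in; lra|].
    pose proof (clamp_lipschitz a b y x ltac:(lra)) as Hl.
    rewrite (clamp_id a b x) in Hl by lra; simpl in Hy; unfold Rdist in Hy; lra. }
  assert (HG : G u = G v) by (unfold G; now rewrite !clamp_id by lra).
  destruct (Rolle G u v pr Hc Huv HG) as [z [P Hz]].
  exists z; split; auto.
  rewrite <- Hz; symmetry; apply derive_pt_eq_0; now apply Hder.
Qed.

Lemma finite_choice (P : nat -> R -> Prop) (n : nat) :
  (forall i, (i < n)%nat -> exists z, P i z) ->
  exists g : nat -> R, forall i, (i < n)%nat -> P i (g i).
Proof.
  induction n; intros H; [exists (fun _ => 0); intros; lia|].
  destruct IHn as [g Hg]; [intros; apply H; lia|].
  destruct (H n ltac:(lia)) as [z Hz].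
  exists (fun i => if Nat.eq_dec i n then z else g i); intros i Hi.
  destruct (Nat.eq_dec i n) as [->|]; auto. apply Hg; lia.
Qed.

Lemma rolle_iterated (a b : R) (n : nat) : forall (G : nat -> R -> R) (z : nat -> R),
  (forall i, (i < n)%nat -> deriv_on a b (G i) (G (S i))) ->
  (forall i, (i < n)%nat -> z i < z (S i)) ->
  (forall i, (i <= n)%nat -> a <= z i <= b) ->
  (forall i, (i <= n)%nat -> G 0%nat (z i) = 0) ->
  exists xi, a <= xi <= b /\ G n xi = 0.
Proof.
  induction n; intros G z Hd Hz Hab H0; [exists (z 0%nat); auto|].
  (* Rolle between consecutive zeros gives n+1 increasing zeros of G 1 *)
  destruct (finite_choice (fun i w => z i < w < z (S i) /\ G 1%nat w = 0) (S n)) as [w Hw].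
  { intros i Hi.
    destruct (rolle_on a b (G 0%nat) (G 1%nat) (z i) (z (S i))) as [x Hx];
      try (apply Hab || apply Hz || apply Hd); try lia.
    - now rewrite !H0 by lia.
    - now exists x. }
  destruct (IHn (fun i => G (S i)) w) as [xi Hxi]; eauto.
  - intros; apply Hd; lia.
  - intros i Hi. destruct (Hw i ltac:(lia)) as [[? ?] _], (Hw (S i) ltac:(lia)) as [[? ?] _]; lra.
  - intros i Hi. destruct (Hw i ltac:(lia)) as [[? ?] _].
    pose proof (Hab i ltac:(lia)); pose proof (Hab (S i) ltac:(lia)); lra.
  - intros i Hi; apply Hw; lia.
Qed.

(** * Nonnegativity of divided differences

    If [F r], the [r]-th derivative of [F 0] on [[a,b]], is nonnegative, then
    every divided difference of order [r] of [F 0] is nonnegative: subtracting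
    the interpolation polynomial [p] at the [r+1] nodes, [F 0 - p] has [r+1]
    zeros, so by iterated Rolle [F r - r! * (leading coeff of p)] has a zero,
    and the leading coefficient of [p] is the divided difference. *)

(** Neville's recursion for the polynomial of degree [l] interpolating [phi]
    at [s_j, ..., s_(j+l)]. *)
Fixpoint neville (s : nat -> R) (phi : R -> R) (l j : nat) : R -> R :=
  match l with
  | O => fun _ => phi (s j)
  | S l' => fun x =>
      ((x - s j) * neville s phi l' (S j) x - (x - s (j + S l')%nat) * neville s phi l' j x)
      / (s (j + S l')%nat - s j)
  end.

Lemma neville_poly (s : nat -> R) (phi : R -> R) (l j : nat) :
  exists L, poly_lead l (neville s phi l j) L.
Proof.
  revert j; induction l; intros j; [exact (ex_intro _ _ (poly_const (phi (s j))))|].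
  destruct (IHl (S j)) as [L1 H1], (IHl j) as [L2 H2].
  set (d := s (j + S l)%nat - s j).
  eexists; eapply poly_ext.
  - exact (poly_comb (S l) _ _ L1 L2 (1 / d) (- (1 / d))
             (poly_mul_linear l _ _ (s j) H1) (poly_mul_linear l _ _ (s (j + S l)%nat) H2)).
  - intros x; simpl; fold d; unfold Rdiv; ring.
Qed.

Section Interpolation.

Variable s : nat -> R.
Hypothesis s_incr : strictly_increasing s.

Lemma neville_interpolates (phi : R -> R) (l j i : nat) :
  (i <= l)%nat -> neville s phi l j (s (j + i)%nat) = phi (s (j + i)%nat).
Proof.
  revert j i; induction l; intros j i Hi.
  - simpl; now replace (j + i)%nat with j by lia.
  - pose proof (node_gap_neq0 s s_incr j (j + S l) ltac:(lia)).
    simpl neville.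
    destruct (Nat.eq_dec i 0) as [->|Hi0]; [|destruct (Nat.eq_dec i (S l)) as [->|HiS]].
    + pose proof (IHl j 0%nat ltac:(lia)) as E.
      rewrite Nat.add_0_r in *; rewrite E; field; auto.
    + pose proof (IHl (S j) l ltac:(lia)) as E.
      replace (S j + l)%nat with (j + S l)%nat in E by lia. rewrite E; field; auto.
    + pose proof (IHl (S j) (i - 1)%nat ltac:(lia)) as E1.
      replace (S j + (i - 1))%nat with (j + i)%nat in E1 by lia.
      rewrite E1, (IHl j i) by lia; field; auto.
Qed.

Lemma divdiff_nonneg (a b : R) (r j : nat) (F : nat -> R -> R) :
  (forall i, (i < r)%nat -> deriv_on a b (F i) (F (S i))) ->
  (forall x, a <= x <= b -> 0 <= F r x) ->
  (forall i, (i <= r)%nat -> a <= s (j + i)%nat <= b) ->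
  0 <= divdiff s r j (F 0%nat).
Proof.
  intros Hd Hpos Hab.
  destruct (neville_poly s (F 0%nat) r j) as [L HL].
  destruct (poly_lead_derivatives _ _ _ HL) as [P [P0 [P1 P2]]].
  assert (E : divdiff s r j (F 0%nat) = L).
  { rewrite <- (divdiff_poly s s_incr r _ L HL j). apply divdiff_ext; intros i Hi.
    replace i with (j + (i - j))%nat by lia. rewrite neville_interpolates; auto; lia. }
  destruct (rolle_iterated a b r (fun i x => F i x - P i x) (fun i => s (j + i)%nat))
    as [xi [Hxi1 Hxi2]]; auto.
  - intros i Hi. apply deriv_on_minus; auto. now apply deriv_on_of_derivable.
  - intros i Hi. rewrite Nat.add_succ_r; apply s_incr.
  - intros i Hi. simpl. rewrite P0, neville_interpolates; auto; ring.
  - simpl in Hxi2; rewrite P2 in Hxi2.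
    pose proof (Hpos xi Hxi1); pose proof (lt_0_INR (fact r) (lt_O_fact r)).
    rewrite E. nra.
Qed.

End Interpolation.

(** * Sign patterns and partial sums *)

Definition sgn (n : nat) : R := (-1) ^ n.

Lemma sgn_S (n : nat) : sgn (S n) = - sgn n.
Proof. unfold sgn; simpl; ring. Qed.

Lemma sgn_even (n : nat) : Nat.even n = true -> sgn n = 1.
Proof. intros H; apply Nat.even_spec in H as [h ->]; apply pow_1_even. Qed.

Lemma sgn_odd (n : nat) : Nat.even n = false -> sgn n = -1.
Proof.
  intros H; destruct (Nat.Even_or_Odd n) as [[h ->]|[h ->]].
  - rewrite Nat.even_even in H; discriminate.
  - rewrite Nat.add_1_r, sgn_S; unfold sgn; rewrite pow_1_even; ring.
Qed.

(** [sign_pattern q e n v]: the sequence [v_0, ..., v_(n-1)] splits into at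
    most [q+1] consecutive blocks of alternating (weak) sign, the first one of
    sign [(-1)^e]. The block index of position [j] is [tau j]. *)
Definition sign_pattern (q e n : nat) (v : nat -> R) : Prop :=
  exists tau : nat -> nat,
    (forall i j, (i <= j)%nat -> (j < n)%nat -> (tau i <= tau j)%nat) /\
    (forall j, (j < n)%nat -> (tau j <= q)%nat) /\
    (forall j, (j < n)%nat -> 0 <= sgn (e + tau j) * v j).

Section PartialSums.

Variables (q e n : nat) (v : nat -> R) (tau : nat -> nat).
Hypothesis tau_mono : forall i j, (i <= j)%nat -> (j < n)%nat -> (tau i <= tau j)%nat.
Hypothesis tau_bound : forall j, (j < n)%nat -> (tau j <= S q)%nat.
Hypothesis tau_sign : forall j, (j < n)%nat -> 0 <= sgn (e + tau j) * v j.

Lemma block_sum_sign (p len t : nat) :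
  (p + len <= n)%nat -> (forall x, (x < len)%nat -> tau (p + x)%nat = t) ->
  0 <= sgn (e + t) * fsum len (fun x => v (p + x)%nat).
Proof.
  intros Hn Ht; rewrite <- fsum_scal; apply fsum_nonneg; intros x Hx.
  rewrite <- (Ht x Hx); apply tau_sign; lia.
Qed.

Lemma partial_sum_first_block (j : nat) :
  (j < n)%nat -> tau j = 0%nat -> 0 <= sgn e * fsum (S j) v.
Proof.
  intros Hj Ht. rewrite <- (Nat.add_0_r e).
  apply (block_sum_sign 0 (S j) 0); [lia|].
  intros x Hx; simpl; pose proof (tau_mono x j ltac:(lia) Hj); lia.
Qed.

Lemma partial_sum_block_mono (i j : nat) :
  (i <= j)%nat -> (j < n)%nat -> tau i = tau j ->
  sgn (e + tau j) * fsum (S i) v <= sgn (e + tau j) * fsum (S j) v.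
Proof.
  intros Hij Hj Ht.
  replace (S j) with (S i + (j - i))%nat by lia; rewrite fsum_split.
  assert (Hrun : 0 <= sgn (e + tau j) * fsum (j - i) (fun x => v (S i + x)%nat)).
  { apply block_sum_sign; [lia|]. intros x Hx.
    pose proof (tau_mono i (S i + x) ltac:(lia) ltac:(lia)).
    pose proof (tau_mono (S i + x) j ltac:(lia) Hj); lia. }
  lra.
Qed.

Hypothesis v_sum0 : fsum n v = 0.

(** For a zero-sum sequence the partial sums in the last block have the sign
    opposite to that block, since they equal minus the remaining tail. *)
Lemma partial_sum_last_block (j : nat) :
  (j < n)%nat -> tau j = S q -> sgn (e + S q) * fsum (S j) v <= 0.
Proof.
  intros Hj Ht.
  assert (E : fsum n v = fsum (S j) v + fsum (n - S j) (fun x => v (S j + x)%nat))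
    by (rewrite <- fsum_split; f_equal; lia).
  assert (Htail : 0 <= sgn (e + S q) * fsum (n - S j) (fun x => v (S j + x)%nat)).
  { apply block_sum_sign; [lia|]. intros x Hx.
    pose proof (tau_mono j (S j + x) ltac:(lia) ltac:(lia)).
    pose proof (tau_bound (S j + x) ltac:(lia)); lia. }
  assert (Hp : fsum (S j) v = - fsum (n - S j) (fun x => v (S j + x)%nat)) by lra.
  rewrite Hp; lra.
Qed.

End PartialSums.

(** A partial sum keeps the block of its index when it has the sign of
    that block, and otherwise moves to the previous block. *)
Lemma sign_pattern_partial_sums (q e n : nat) (v : nat -> R) :
  sign_pattern (S q) e n v -> fsum n v = 0 ->
  sign_pattern q e n (fun j => fsum (S j) v).
Proof.
  intros [tau [Hm [Hq Hs]]] Hz.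
  set (P := fun j => fsum (S j) v).
  set (good := fun j => if Rle_dec 0 (sgn (e + tau j) * P j) then true else false).
  assert (first_good : forall j, (j < n)%nat -> tau j = 0%nat -> good j = true).
  { intros j Hj Ht; unfold good; destruct Rle_dec as [|Hn]; auto.
    pose proof (partial_sum_first_block e n v tau Hm Hs j Hj Ht).
    rewrite Ht, Nat.add_0_r in Hn; unfold P in Hn; lra. }
  exists (fun j => if good j then Nat.min (tau j) q else (tau j - 1)%nat); repeat split.
  - intros i j Hij Hj. pose proof (Hq j Hj); pose proof (Hm i j Hij Hj).
    destruct (Nat.eq_dec (tau i) (tau j)) as [Heq|Hne];
      [|destruct (good i), (good j); lia].
    destruct (good i) eqn:Gi, (good j) eqn:Gj; try lia.
    unfold good in Gi, Gj; destruct Rle_dec as [Hi|] in Gi; [|discriminate].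
    destruct Rle_dec as [|Hj'] in Gj; [discriminate|].
    pose proof (partial_sum_block_mono e n v tau Hm Hs i j Hij Hj Heq).
    rewrite Heq in Hi; unfold P in *; lra.
  - intros j Hj. pose proof (Hq j Hj). pose proof (first_good j Hj).
    destruct (good j), (Nat.eq_dec (tau j) 0); lia.
  - intros j Hj. pose proof (Hq j Hj). fold (P j).
    destruct (good j) eqn:G; unfold good in G; destruct Rle_dec as [Hg|Hg] in G;
      try discriminate.
    + destruct (Nat.eq_dec (tau j) (S q)) as [E|E].
      * pose proof (partial_sum_last_block q e n v tau Hm Hq Hs Hz j Hj E).
        replace (Nat.min (tau j) q) with q by lia.
        rewrite Nat.add_succ_r, sgn_S in *; unfold P; lra.
      * now replace (Nat.min (tau j) q) with (tau j) by lia.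
    + assert (tau j <> 0%nat) by (intro E; pose proof (first_good j Hj E) as G';
        unfold good in G'; destruct Rle_dec in G'; [lra|discriminate]).
      replace (e + tau j)%nat with (S (e + (tau j - 1))) in Hg by lia.
      rewrite sgn_S in Hg; lra.
Qed.

Lemma sign_pattern_flip (q e n : nat) (v d : nat -> R) :
  sign_pattern q e n v -> (forall j, (j < n)%nat -> 0 < d j) ->
  sign_pattern q (S e) n (fun j => d j * - v j).
Proof.
  intros [tau [Hm [Hq Hs]]] Hd; exists tau; repeat split; auto.
  intros j Hj; simpl; rewrite sgn_S.
  pose proof (Hs j Hj); pose proof (Hd j Hj).
  replace (- sgn (e + tau j) * (d j * - v j)) with (d j * (sgn (e + tau j) * v j)) by ring.
  apply Rmult_le_pos; lra.
Qed.

Lemma sign_pattern_prefix (q e n n' : nat) (v : nat -> R) :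
  (n' <= n)%nat -> sign_pattern q e n v -> sign_pattern q e n' v.
Proof.
  intros Hn [tau [Hm [Hq Hs]]]; exists tau; repeat split; intros;
    [apply Hm|apply Hq|apply Hs]; lia.
Qed.

Lemma sign_pattern_nonneg (e n : nat) (v : nat -> R) :
  Nat.even e = true -> sign_pattern 0 e n v -> forall j, (j < n)%nat -> 0 <= v j.
Proof.
  intros He [tau [_ [Hq Hs]]] j Hj. pose proof (Hq j Hj); pose proof (Hs j Hj) as Hsj.
  replace (tau j) with 0%nat in Hsj by lia. rewrite Nat.add_0_r, sgn_even in Hsj; auto; lra.
Qed.

(** * From weighted point sums to divided differences

    Let [s] be strictly increasing and [c_0, ..., c_(m-1)] real weights. Abel
    summation rewrites [sum_j c_j g(s_j)] as a combination of first divided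
    differences of [g] with weights [W_1], then of second ones with weights
    [W_2], and so on, as long as the weights being summed by parts have total
    zero; this is guaranteed by the vanishing of the first moments of [c]. *)

Fixpoint abel_weights (s c : nat -> R) (r : nat) : nat -> R :=
  match r with
  | O => c
  | S r' => fun j => (s (j + S r')%nat - s j) * - fsum (S j) (abel_weights s c r')
  end.

Section AbelWeights.

Variables (s c : nat -> R) (m : nat).
Hypothesis s_incr : strictly_increasing s.

Lemma abel_weights_identity (r : nat) :
  (forall r', (r' < r)%nat -> fsum (m - r') (abel_weights s c r') = 0) ->
  forall g, fsum m (fun j => c j * g (s j)) =
            fsum (m - r) (fun j => abel_weights s c r j * divdiff s r j g).
Proof.
  induction r; intros Hz g.
  - rewrite Nat.sub_0_r; reflexivity.
  - rewrite IHr by (intros; apply Hz; lia).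
    destruct (m - r)%nat as [|n] eqn:Em; [now replace (m - S r)%nat with 0%nat by lia|].
    pose proof (Hz r ltac:(lia)) as Hz0; rewrite Em in Hz0.
    rewrite abel_summation, Hz0, Rmult_0_l, Rminus_0_l, fsum_opp.
    replace (m - S r)%nat with n by lia.
    apply fsum_ext; intros j Hj.
    pose proof (node_gap_neq0 s s_incr j (j + S r) ltac:(lia)).
    simpl; field; auto.
Qed.

Lemma abel_weights_sum_zero (k : nat) :
  (forall p, (p < k)%nat -> fsum m (fun j => c j * s j ^ p) = 0) ->
  forall r, (r < k)%nat -> fsum (m - r) (abel_weights s c r) = 0.
Proof.
  intros Hp r.
  induction r as [r IH] using (well_founded_induction lt_wf); intros Hr.
  rewrite <- (Hp r Hr).
  pose proof (abel_weights_identity r ltac:(intros r' Hr'; apply IH; lia) (fun x => x ^ r)) as E.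
  cbv beta in E; rewrite E.
  apply fsum_ext; intros j _.
  rewrite (divdiff_poly s s_incr _ _ _ (poly_lead_pow r)); ring.
Qed.

Lemma abel_weights_sign_pattern (k : nat) :
  (forall p, (p < k)%nat -> fsum m (fun j => c j * s j ^ p) = 0) ->
  sign_pattern (k - 1) (k - 1) (m - 1) (abel_weights s c 1) ->
  forall t, (t <= k - 1)%nat ->
    sign_pattern (k - 1 - t) (k - 1 + t) (m - S t) (abel_weights s c (S t)).
Proof.
  intros Hp H1; induction t; intros Ht.
  - now rewrite Nat.sub_0_r, Nat.add_0_r.
  - pose proof (IHt ltac:(lia)) as H.
    replace (k - 1 - t)%nat with (S (k - 1 - S t)) in H by lia.
    apply sign_pattern_partial_sums in H; [|apply (abel_weights_sum_zero k); auto; lia].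
    apply (sign_pattern_prefix _ _ _ (m - S (S t))) in H; [|lia].
    replace (k - 1 + S t)%nat with (S (k - 1 + t)) by lia.
    apply (sign_pattern_flip _ _ _ _ (fun j => s (j + S (S t))%nat - s j) H).
    intros j Hj; pose proof (strictly_increasing_lt s s_incr j (j + S (S t)) ltac:(lia)); lra.
Qed.

Lemma weighted_sum_nonneg (a b : R) (k : nat) (f : R -> R) :
  (1 <= k)%nat ->
  (forall j, (j < m)%nat -> a <= s j <= b) ->
  (forall p, (p < k)%nat -> fsum m (fun j => c j * s j ^ p) = 0) ->
  sign_pattern (k - 1) (k - 1) (m - 1) (abel_weights s c 1) ->
  k_diff_nonneg_kth k a b f ->
  0 <= fsum m (fun j => c j * f (s j)).
Proof.
  intros Hk Hab Hp HW1 [D [HD0 [HD1 HD2]]].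
  pose proof (abel_weights_sign_pattern k Hp HW1 (k - 1) ltac:(lia)) as HWk.
  replace (S (k - 1)) with k in HWk by lia; rewrite Nat.sub_diag in HWk.
  assert (Wk_nonneg : forall j, (j < m - k)%nat -> 0 <= abel_weights s c k j).
  { apply (sign_pattern_nonneg (k - 1 + (k - 1))); auto.
    apply Nat.even_spec; exists (k - 1)%nat; lia. }
  rewrite (abel_weights_identity k) by (intros; apply (abel_weights_sum_zero k); auto).
  apply fsum_nonneg; intros j Hj; apply Rmult_le_pos; auto.
  rewrite (divdiff_ext s k j f (D 0%nat)).
  - apply (divdiff_nonneg s s_incr a b k j D); auto; intros; apply Hab; lia.
  - intros i Hi; symmetry; apply HD0, Hab; lia.
Qed.

End AbelWeights.

Lemma first_index_above (s : nat -> R) (x : R) (p : nat) :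
  strictly_increasing s -> x < s p ->
  exists q, (q <= p)%nat /\ x < s q /\ forall j, (j < q)%nat -> s j <= x.
Proof.
  intros Hs; induction p as [|p IH]; intros Hp.
  - exists 0%nat; repeat split; auto; intros; lia.
  - destruct (Rlt_dec x (s p)) as [Hlt|Hge].
    + destruct (IH Hlt) as [q [? ?]]; exists q; split; auto.
    + exists (S p); repeat split; auto. intros j Hj.
      pose proof (strictly_increasing_le s Hs j p ltac:(lia)); lra.
Qed.

Definition nodes_of (s : nat -> R) (m : nat) (v : nat -> R) (n : nat) (U : R) : Prop :=
  strictly_increasing s /\
  (forall j, (j < m)%nat -> exists i, (i < n)%nat /\ s j = v i) /\
  (forall i, (i < n)%nat -> exists j, (j < m)%nat /\ s j = v i) /\
  (forall j, (m <= j)%nat -> U < s j).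

Lemma nodes_of_insert (s : nat -> R) (m : nat) (v : nat -> R) (n : nat) (U : R) :
  nodes_of s m v n U -> v n < U -> (forall j, s j <> v n) ->
  exists s', nodes_of s' (S m) v (S n) U.
Proof.
  intros [Hs [H1 [H2 H3]]] HU Hnew.
  destruct (first_index_above s (v n) m Hs ltac:(specialize (H3 m (le_n m)); lra))
    as [q [Hqm [Hxq Hbelow]]].
  assert (Hlt : forall j, (j < q)%nat -> s j < v n).
  { intros j Hj; pose proof (Hbelow j Hj); pose proof (Hnew j).
    destruct (Req_dec (s j) (v n)); [contradiction|lra]. }
  (* the new value goes to position q, the nodes from q on move up by one *)
  exists (fun j => if lt_dec j q then s j else if Nat.eq_dec j q then v n else s (j - 1)%nat).
  repeat split.
  - intros j; cbv beta; replace (S j - 1)%nat with j by lia.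
    repeat (destruct lt_dec || destruct Nat.eq_dec); try lia.
    + apply Hs.
    + apply Hlt; lia.
    + congruence.
    + replace j with (S (j - 1)) at 2 by lia; apply Hs.
  - intros j Hj. destruct (lt_dec j q), (Nat.eq_dec j q); [lia| |exists n; auto|].
    + destruct (H1 j ltac:(lia)) as [i ?]; exists i; split; [lia|tauto].
    + destruct (H1 (j - 1)%nat ltac:(lia)) as [i ?]; exists i; split; [lia|tauto].
  - intros i Hi. destruct (Nat.eq_dec i n) as [->|Hin].
    { exists q; split; [lia|]. destruct (lt_dec q q); [lia|]. now destruct Nat.eq_dec. }
    destruct (H2 i ltac:(lia)) as [j [Hj Hji]].
    destruct (lt_dec j q); [exists j; split; [lia|]; now destruct lt_dec|].
    exists (S j); split; [lia|]. destruct (lt_dec (S j) q), (Nat.eq_dec (S j) q); try lia.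
    now replace (S j - 1)%nat with j by lia.
  - intros j Hj. destruct (lt_dec j q), (Nat.eq_dec j q); try lia. apply H3; lia.
Qed.

Lemma nodes_of_exist (v : nat -> R) (U : R) (n : nat) :
  (forall i, (i < n)%nat -> v i < U) -> exists m s, nodes_of s m v n U.
Proof.
  induction n; intros HU.
  - exists 0%nat, (fun j => U + 1 + INR j); repeat split; try (intros; lia).
    + intros j; rewrite S_INR; lra.
    + intros j _; pose proof (pos_INR j); lra.
  - destruct IHn as [m [s Hnodes]]; [intros; apply HU; lia|].
    pose proof Hnodes as [Hs [H1 [H2 H3]]].
    destruct (classic (exists j, s j = v n)) as [[j0 Hj0]|Hnot].
    +
      assert (Hj0m : (j0 < m)%nat).
      { destruct (Nat.lt_ge_cases j0 m) as [|Hge]; auto.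
        pose proof (H3 j0 Hge); pose proof (HU n ltac:(lia)); lra. }
      exists m, s; repeat split; auto.
      * intros j Hj; destruct (H1 j Hj) as [i ?]; exists i; split; [lia|tauto].
      * intros i Hi; destruct (Nat.eq_dec i n) as [->|]; [now exists j0|apply H2; lia].
    + destruct (nodes_of_insert s m v n U Hnodes) as [s' Hs'];
        [apply HU; lia|intros j E; apply Hnot; eauto|eauto].
Qed.

Definition delta (x y : R) : R := if Req_EM_T x y then 1 else 0.

Lemma delta_sum_nodes (s : nat -> R) (m : nat) (x : R) :
  strictly_increasing s -> (exists j, (j < m)%nat /\ s j = x) ->
  fsum m (fun j => delta x (s j)) = 1.
Proof.
  intros Hs; induction m; intros [j0 [Hj0 E]]; [lia|]. simpl.
  destruct (Nat.eq_dec j0 m) as [->|Hne].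
  - rewrite fsum_zero; unfold delta.
    + destruct Req_EM_T; [lra|congruence].
    + intros i Hi; destruct Req_EM_T; auto.
      pose proof (strictly_increasing_lt s Hs i m Hi); subst; lra.
  - rewrite IHm by (exists j0; split; auto; lia). unfold delta.
    destruct Req_EM_T; [|lra].
    pose proof (strictly_increasing_lt s Hs j0 m ltac:(lia)); subst; lra.
Qed.

Lemma regroup_by_nodes (s : nat -> R) (m : nat) (u : nat -> R) (n : nat) (g : R -> R) :
  strictly_increasing s ->
  (forall i, (i < n)%nat -> exists j, (j < m)%nat /\ s j = u i) ->
  fsum n (fun i => g (u i)) = fsum m (fun j => fsum n (fun i => delta (u i) (s j)) * g (s j)).
Proof.
  intros Hs H.
  transitivity (fsum n (fun i => fsum m (fun j => delta (u i) (s j) * g (s j)))).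
  - apply fsum_ext; intros i Hi.
    rewrite <- (Rmult_1_l (g (u i))), <- (delta_sum_nodes s m (u i) Hs (H i Hi)).
    rewrite Rmult_comm, <- fsum_scal; apply fsum_ext; intros j _.
    unfold delta; destruct Req_EM_T as [e|]; [rewrite e|]; ring.
  - rewrite fsum_exchange; apply fsum_ext; intros j _.
    rewrite Rmult_comm, <- fsum_scal; apply fsum_ext; intros; ring.
Qed.

(** * Sign changes of the difference of two counting functions

    For nonincreasing counting functions [A, B : R -> nat] with values in
    [[0, k+1]], the difference [A - B] changes sign at most [k-1] times, ending
    with sign [+], provided the top and bottom configurations are as in the
    theorem. Along increasing [t], the level [min (A t) (B t)] can only go
    down; a block index [level t] is built from it, using its parity to decide
    which of [A], [B] may be larger at that level. *)

Lemma sgn_parity (n p z : nat) : (n + p = 2 * z)%nat -> sgn n = sgn p.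
Proof.
  intros H.
  assert (E : sgn n * sgn p = 1) by (unfold sgn; rewrite <- pow_add, H; apply pow_1_even).
  assert (sgn p * sgn p = 1).
  { unfold sgn; rewrite <- pow_add; replace (p + p)%nat with (2 * p)%nat by lia.
    apply pow_1_even. }
  assert (sgn p <> 0) by (intro Z; rewrite Z in E; lra).
  apply (Rmult_eq_reg_r (sgn p)); auto; lra.
Qed.

Section CountingSigns.

Variables (k : nat) (A B : R -> nat).
Hypothesis k_pos : (1 <= k)%nat.
Hypothesis A_le : forall t, (A t <= S k)%nat.
Hypothesis B_le : forall t, (B t <= S k)%nat.
Hypothesis AB_anti : forall t1 t2, t1 <= t2 -> (A t2 <= A t1)%nat /\ (B t2 <= B t1)%nat.
Hypothesis top : forall t, A t = 0%nat -> B t = 0%nat.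
Hypothesis bottom_even : forall t, Nat.even k = true -> ~ (A t = S k /\ B t = k).
Hypothesis bottom_odd : forall t, Nat.even k = false -> ~ (A t = k /\ B t = S k).

Definition favored (t : R) : bool :=
  if Nat.even (Nat.min (A t) (B t)) then (B t <? A t)%nat else (A t <? B t)%nat.

Definition level (t : R) : nat :=
  Nat.min (k - 1) (k - Nat.min (A t) (B t) - (if favored t then 1 else 0)).

Lemma level_mono (t1 t2 : R) : t1 <= t2 -> (level t1 <= level t2)%nat.
Proof.
  intros Ht. destruct (AB_anti t1 t2 Ht) as [Ha Hb]. unfold level.
  destruct (Nat.eq_dec (Nat.min (A t1) (B t1)) (Nat.min (A t2) (B t2))) as [E|E];
    [|destruct (favored t1), (favored t2); lia].
  (* at a constant level, a point cannot become favored as t grows *)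
  destruct (favored t1) eqn:F1, (favored t2) eqn:F2; try lia.
  unfold favored in F1, F2; rewrite E in F1.
  destruct (Nat.even (Nat.min (A t2) (B t2)));
    apply Nat.ltb_lt in F2; apply Nat.ltb_ge in F1; lia.
Qed.

(** Where [B] exceeds [A], the block sign [(-1)^(k-1+level t)] is [-1]; the
    bottom hypothesis for odd [k] rules out the one case where the cap at
    [k - 1] would spoil the parity. *)
Lemma level_sign_A_lt_B (t : R) :
  (A t < B t)%nat -> sgn (k - 1 + level t) = -1.
Proof.
  intros Hlt. pose proof (B_le t).
  assert (Hmin : Nat.min (A t) (B t) = A t) by lia.
  assert (A t <> 0%nat) by (intro E; pose proof (top t E); lia).
  unfold level, favored; rewrite Hmin.
  destruct (Nat.even (A t)) eqn:Ev.
  - assert (A t <> 1%nat) by (intro E; rewrite E in Ev; discriminate).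
    replace (A t <? B t)%nat with true by (symmetry; apply Nat.ltb_lt; lia).
    replace (B t <? A t)%nat with false by (symmetry; apply Nat.ltb_ge; lia).
    replace (k - 1 + _)%nat with (k - 1 + (k - A t))%nat by lia.
    rewrite (sgn_parity _ (S (A t)) k) by lia; rewrite sgn_S, sgn_even; auto; ring.
  - assert (A t < k)%nat.
    { destruct (Nat.le_gt_cases k (A t)); auto. exfalso.
      apply (bottom_odd t); [|lia]. now replace k with (A t) by lia. }
    replace (A t <? B t)%nat with true by (symmetry; apply Nat.ltb_lt; lia).
    replace (k - 1 + _)%nat with (k - 1 + (k - A t - 1))%nat by lia.
    rewrite (sgn_parity _ (A t) (k - 1)) by lia; now apply sgn_odd.
Qed.

Lemma level_sign_B_lt_A (t : R) :
  (B t < A t)%nat -> sgn (k - 1 + level t) = 1.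
Proof.
  intros Hlt. pose proof (A_le t).
  assert (Hmin : Nat.min (A t) (B t) = B t) by lia.
  unfold level, favored; rewrite Hmin.
  destruct (Nat.even (B t)) eqn:Ev.
  - assert (B t < k)%nat.
    { destruct (Nat.le_gt_cases k (B t)); auto. exfalso.
      apply (bottom_even t); [|lia]. now replace k with (B t) by lia. }
    replace (B t <? A t)%nat with true by (symmetry; apply Nat.ltb_lt; lia).
    replace (k - 1 + _)%nat with (k - 1 + (k - B t - 1))%nat by lia.
    rewrite (sgn_parity _ (B t) (k - 1)) by lia; now apply sgn_even.
  - assert (B t <> 0%nat) by (intro E; rewrite E in Ev; discriminate).
    replace (A t <? B t)%nat with false by (symmetry; apply Nat.ltb_ge; lia).
    replace (k - 1 + _)%nat with (k - 1 + (k - B t))%nat by lia.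
    rewrite (sgn_parity _ (S (B t)) k) by lia; rewrite sgn_S, sgn_odd; auto; ring.
Qed.

Lemma level_sign (t : R) : 0 <= sgn (k - 1 + level t) * (INR (A t) - INR (B t)).
Proof.
  destruct (lt_eq_lt_dec (A t) (B t)) as [[Hlt|Heq]|Hgt].
  - rewrite level_sign_A_lt_B by auto. apply lt_INR in Hlt; lra.
  - rewrite Heq; lra.
  - rewrite level_sign_B_lt_A by auto. apply lt_INR in Hgt; lra.
Qed.

End CountingSigns.

Fixpoint count_above (u : nat -> R) (t : R) (n : nat) : nat :=
  match n with
  | O => O
  | S n' => (count_above u t n' + if Rlt_dec t (u n') then 1 else 0)%nat
  end.

Lemma count_above_le (u : nat -> R) (t : R) (n : nat) : (count_above u t n <= n)%nat.
Proof. induction n; simpl; auto. destruct Rlt_dec; lia. Qed.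

Lemma count_above_anti (u : nat -> R) (t1 t2 : R) (n : nat) :
  t1 <= t2 -> (count_above u t2 n <= count_above u t1 n)%nat.
Proof.
  intros H; induction n; simpl; auto.
  destruct (Rlt_dec t2 (u n)), (Rlt_dec t1 (u n)); try lia; lra.
Qed.

Lemma count_above_full (u : nat -> R) (t : R) (n : nat) :
  count_above u t n = n -> forall i, (i < n)%nat -> t < u i.
Proof.
  induction n; simpl; intros H i Hi; [lia|]. pose proof (count_above_le u t n).
  destruct (Rlt_dec t (u n)); [|lia].
  destruct (Nat.eq_dec i n) as [->|]; auto. apply IHn; lia.
Qed.

Lemma count_above_not_full (u : nat -> R) (t : R) (n : nat) :
  (count_above u t n < n)%nat -> exists i, (i < n)%nat /\ u i <= t.
Proof.
  induction n; simpl; intros H; [lia|]. destruct (Rlt_dec t (u n)) as [|Hn].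
  - destruct IHn as [i [Hi Hi']]; [lia|]. exists i; split; auto.
  - exists n; split; [lia|lra].
Qed.

Lemma count_above_zero (u : nat -> R) (t : R) (n : nat) :
  count_above u t n = 0%nat -> forall i, (i < n)%nat -> u i <= t.
Proof.
  induction n; simpl; intros H i Hi; [lia|]. destruct (Rlt_dec t (u n)) as [|Hn]; [lia|].
  destruct (Nat.eq_dec i n) as [->|]; [lra|]. apply IHn; lia.
Qed.

Lemma count_above_pos (u : nat -> R) (t : R) (n : nat) :
  (0 < count_above u t n)%nat -> exists i, (i < n)%nat /\ t < u i.
Proof.
  induction n; simpl; intros H; [lia|]. destruct (Rlt_dec t (u n)); [exists n; auto|].
  destruct IHn as [i [Hi Hi']]; [lia|]. exists i; split; auto.
Qed.

Lemma fsum_indicator_le (u : nat -> R) (t : R) (n : nat) :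
  fsum n (fun i => if Rle_dec (u i) t then 1 else 0) = INR n - INR (count_above u t n).
Proof.
  induction n; [simpl; ring|]. simpl fsum; simpl count_above.
  rewrite S_INR, plus_INR, IHn.
  destruct (Rle_dec (u n) t), (Rlt_dec t (u n)); simpl; lra.
Qed.

Lemma nonincreasing_le (u : nat -> R) (k : nat) :
  (forall i, (i < k)%nat -> u (S i) <= u i) ->
  forall i j, (i <= j)%nat -> (j <= k)%nat -> u j <= u i.
Proof.
  intros H i j Hij Hj; induction Hij; [lra|].
  pose proof (H m ltac:(lia)); pose proof (IHHij ltac:(lia)); lra.
Qed.

Lemma counts_sign_pattern (k : nat) (a_ b_ : nat -> R) :
  (1 <= k)%nat ->
  (forall i, (i < k)%nat -> a_ (S i) <= a_ i) ->
  (forall i, (i < k)%nat -> b_ (S i) <= b_ i) ->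
  b_ 0%nat <= a_ 0%nat ->
  (-1) ^ k * a_ k <= (-1) ^ k * b_ k ->
  exists T : R -> nat,
    (forall t1 t2, t1 <= t2 -> (T t1 <= T t2)%nat) /\ (forall t, (T t <= k - 1)%nat) /\
    (forall t, 0 <= sgn (k - 1 + T t) *
                    (INR (count_above a_ t (S k)) - INR (count_above b_ t (S k)))).
Proof.
  intros Hk Hma Hmb Htop Hbot.
  set (A := fun t => count_above a_ t (S k)); set (B := fun t => count_above b_ t (S k)).
  assert (HA : forall t, (A t <= S k)%nat) by (intros; apply count_above_le).
  assert (HB : forall t, (B t <= S k)%nat) by (intros; apply count_above_le).
  assert (Hanti : forall t1 t2, t1 <= t2 -> (A t2 <= A t1)%nat /\ (B t2 <= B t1)%nat)
    by (intros; split; apply count_above_anti; auto).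
  assert (Hzero : forall t, A t = 0%nat -> B t = 0%nat).
  { (* all a_i <= t forces all b_i <= b_0 <= a_0 <= t *)
    intros t HA0. pose proof (count_above_zero a_ t _ HA0 0%nat ltac:(lia)).
    destruct (B t) eqn:EB; auto. exfalso.
    destruct (count_above_pos b_ t (S k)) as [i [Hi Hi']]; [unfold B in EB; lia|].
    pose proof (nonincreasing_le b_ k Hmb 0 i ltac:(lia) ltac:(lia)); lra. }
  assert (Heven : forall t, Nat.even k = true -> ~ (A t = S k /\ B t = k)).
  { (* otherwise b_k <= t < a_k, against a_k <= b_k *)
    intros t Ev [EA EB]. pose proof (count_above_full a_ t _ EA k ltac:(lia)).
    destruct (count_above_not_full b_ t (S k)) as [i [Hi Hi']]; [unfold B in EB; lia|].
    pose proof (nonincreasing_le b_ k Hmb i k ltac:(lia) ltac:(lia)).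
    fold (sgn k) in Hbot; rewrite sgn_even in Hbot; auto; lra. }
  assert (Hodd : forall t, Nat.even k = false -> ~ (A t = k /\ B t = S k)).
  { (* otherwise a_k <= t < b_k, against b_k <= a_k *)
    intros t Ev [EA EB]. pose proof (count_above_full b_ t _ EB k ltac:(lia)).
    destruct (count_above_not_full a_ t (S k)) as [i [Hi Hi']]; [unfold A in EA; lia|].
    pose proof (nonincreasing_le a_ k Hma i k ltac:(lia) ltac:(lia)).
    fold (sgn k) in Hbot; rewrite sgn_odd in Hbot; auto; lra. }
  exists (level k A B); repeat split.
  - intros; now apply level_mono.
  - intros; unfold level; lia.
  - intros; now apply level_sign.
Qed.

(** Testing a representation of the difference of two samples against the
    indicator of [(-oo, s_j]] computes the partial sums of its weights. *)
Lemma weights_partial_sums (s c : nat -> R) (m n : nat) (u w : nat -> R) :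
  strictly_increasing s ->
  (forall g, fsum n (fun i => g (u i)) - fsum n (fun i => g (w i)) =
             fsum m (fun j => c j * g (s j))) ->
  forall j, (j < m)%nat ->
    fsum (S j) c = INR (count_above w (s j) n) - INR (count_above u (s j) n).
Proof.
  intros Hs Hrepr j Hj.
  pose proof (Hrepr (fun x => if Rle_dec x (s j) then 1 else 0)) as E; cbv beta in E.
  rewrite !fsum_indicator_le in E.
  replace m with (S j + (m - S j))%nat in E by lia; rewrite fsum_split in E.
  rewrite (fsum_zero (m - S j)) in E.
  - rewrite (fsum_ext (S j) _ c) in E; [lra|].
    intros i Hi; destruct Rle_dec as [|Hn]; [ring|].
    exfalso; apply Hn, strictly_increasing_le; auto; lia.
  - intros i Hi; destruct Rle_dec; [|ring].
    pose proof (strictly_increasing_lt s Hs j (S j + i) ltac:(lia)); lra.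
Qed.

Lemma two_samples_on_nodes (a b : R) (n : nat) (u w : nat -> R) :
  (forall i, (i < n)%nat -> a <= u i <= b) ->
  (forall i, (i < n)%nat -> a <= w i <= b) ->
  exists m s c,
    strictly_increasing s /\ (forall j, (j < m)%nat -> a <= s j <= b) /\
    (forall g, fsum n (fun i => g (u i)) - fsum n (fun i => g (w i)) =
               fsum m (fun j => c j * g (s j))) /\
    (forall j, (j < m)%nat ->
       fsum (S j) c = INR (count_above w (s j) n) - INR (count_above u (s j) n)).
Proof.
  intros Hu Hw.
  set (v := fun i => if (i <? n)%nat then u i else w (i - n)%nat).
  assert (Hv : forall i, (i < n + n)%nat -> a <= v i <= b).
  { intros i Hi; unfold v; destruct (Nat.ltb_spec i n); [apply Hu|apply Hw]; lia. }
  destruct (nodes_of_exist v (b + 1) (n + n)) as [m [s [Hs [H1 [H2 _]]]]].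
  { intros i Hi; pose proof (Hv i Hi); lra. }
  assert (Hnode_u : forall i, (i < n)%nat -> exists j, (j < m)%nat /\ s j = u i).
  { intros i Hi; destruct (H2 i ltac:(lia)) as [j [Hj E]]; exists j; split; auto.
    rewrite E; unfold v; destruct (Nat.ltb_spec i n); auto; lia. }
  assert (Hnode_w : forall i, (i < n)%nat -> exists j, (j < m)%nat /\ s j = w i).
  { intros i Hi; destruct (H2 (n + i)%nat ltac:(lia)) as [j [Hj E]]; exists j; split; auto.
    rewrite E; unfold v; destruct (Nat.ltb_spec (n + i) n); [lia|]. f_equal; lia. }
  set (c := fun j => fsum n (fun i => delta (u i) (s j)) - fsum n (fun i => delta (w i) (s j))).
  assert (Hrepr : forall g, fsum n (fun i => g (u i)) - fsum n (fun i => g (w i)) =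
                            fsum m (fun j => c j * g (s j))).
  { intros g; rewrite (regroup_by_nodes s m u n g), (regroup_by_nodes s m w n g), <- fsum_minus;
      auto.
    apply fsum_ext; intros; unfold c; ring. }
  exists m, s, c; split; [|split; [|split]]; auto.
  - intros j Hj; destruct (H1 j Hj) as [i [Hi ->]]; apply Hv; lia.
  - exact (weights_partial_sums s c m n u w Hs Hrepr).
Qed.

Theorem mainTheorem7 (k : nat) (a b : R) (a_ b_ : nat -> R) :
  (1 <= k)%nat ->
  (forall i, (i <= k)%nat -> a <= a_ i <= b) ->
  (forall i, (i <= k)%nat -> a <= b_ i <= b) ->
  (forall i, (i < k)%nat -> a_ (S i) <= a_ i) ->
  (forall i, (i < k)%nat -> b_ (S i) <= b_ i) ->
  b_ 0%nat <= a_ 0%nat ->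
  (-1) ^ k * a_ k <= (-1) ^ k * b_ k ->
  (forall j, (1 <= j)%nat -> (j < k)%nat ->
     sum_f_R0 (fun i => a_ i ^ j) k = sum_f_R0 (fun i => b_ i ^ j) k) ->
  forall f : R -> R, k_diff_nonneg_kth k a b f ->
    sum_f_R0 (fun i => f (a_ i)) k >= sum_f_R0 (fun i => f (b_ i)) k.
Proof.
  intros Hk Ha Hb Hma Hmb Htop Hbot Hpow f Hf.
  destruct (two_samples_on_nodes a b (S k) a_ b_) as [m [s [c [Hs [Hsab [Hrepr Hpart]]]]]];
    [intros; apply Ha; lia|intros; apply Hb; lia|].
  destruct (counts_sign_pattern k a_ b_ Hk Hma Hmb Htop Hbot) as [T [HTmono [HTle HTsign]]].
  assert (Hmoments : forall p, (p < k)%nat -> fsum m (fun j => c j * s j ^ p) = 0).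
  { intros p Hp. rewrite <- (Hrepr (fun x => x ^ p)), <- !sum_f_R0_fsum.
    destruct p as [|p]; [simpl; ring|]. rewrite Hpow by lia; ring. }
  (* W_1 j = (s_(j+1) - s_j) (A - B)(s_j) inherits the sign pattern of A - B *)
  assert (HW1 : sign_pattern (k - 1) (k - 1) (m - 1) (abel_weights s c 1)).
  { exists (fun j => T (s j)); repeat split; auto.
    - intros i j Hij _; apply HTmono, strictly_increasing_le; auto.
    - intros j Hj.
      change (abel_weights s c 1 j) with ((s (j + 1)%nat - s j) * - fsum (S j) c).
      rewrite Hpart, Nat.add_1_r by lia.
      pose proof (HTsign (s j)); pose proof (Hs j).
      replace (_ * (_ * - (_ - _))) with
        ((s (S j) - s j) * (sgn (k - 1 + T (s j)) *
          (INR (count_above a_ (s j) (S k)) - INR (count_above b_ (s j) (S k))))) by ring.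
      apply Rmult_le_pos; lra. }
  pose proof (weighted_sum_nonneg s c m Hs a b k f Hk Hsab Hmoments HW1 Hf) as Hnonneg.
  rewrite <- Hrepr in Hnonneg. rewrite !sum_f_R0_fsum. lra.
Qed.
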